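(* Let $R$ be a CSNC ring and let $S\subseteq R$ be a subset closed under addition, negation and multiplication which is itself a ring with an identity element $1_S$ (not necessarily equal to $1_R$). Then $S$ is a CSNC ring. In particular, for every $e\in\mathrm{Id}(R)$ the corner ring $eRe$ is a CSNC ring.
   Context: All rings are associative with identity. For a ring $R$, $\mathrm{Id}(R)$, $U(R)$, $\mathrm{Nil}(R)$ denote the sets of idempotents, units and nilpotent elements. An element $a\in R$ is clean if $a=e+u$ for some $e\in\mathrm{Id}(R)$, $u\in U(R)$. An element $a$ is strongly nil-clean if $a=e+q$ with $e\in \mathrm{Id}(R)$, $q\in\mathrm{Nil}(R)$ and $eq=qe$. A ring $R$ is called CSNC if every clean element of $R$ is strongly nil-clean. *)

From mathcomp Require Import all_boot all_algebra.
Set Implicit Arguments. Unset Strict Implicit. Unset Printing Implicit Defensive.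
Import GRing.Theory.
Local Open Scope ring_scope.

Definition idem (R : nzRingType) (e : R) : Prop := e * e = e.
Definition nilp (R : nzRingType) (q : R) : Prop := exists n : nat, q ^+ n = 0.

Definition is_unit (R : nzRingType) (u : R) : Prop :=
  exists v : R, u * v = 1 /\ v * u = 1.

Definition clean (R : nzRingType) (a : R) : Prop :=
  exists e u : R, idem e /\ is_unit u /\ a = e + u.
Definition strongly_nil_clean (R : nzRingType) (a : R) : Prop :=
  exists e q : R, idem e /\ nilp q /\ e * q = q * e /\ a = e + q.
Definition CSNC (R : nzRingType) : Prop :=
  forall a : R, clean a -> strongly_nil_clean a.

Definition subring_with_id (R : nzRingType) (S : R -> Prop) (o : R) : Prop :=
  [/\ (forall x y, S x -> S y -> S (x + y)),
      (forall x, S x -> S (- x)),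
      (forall x y, S x -> S y -> S (x * y)),
      S o &
      (forall x, S x -> o * x = x /\ x * o = x)].

Definition idem_in (R : nzRingType) (S : R -> Prop) (e : R) : Prop :=
  S e /\ e * e = e.
Definition unit_in (R : nzRingType) (S : R -> Prop) (o u : R) : Prop :=
  S u /\ exists v, S v /\ u * v = o /\ v * u = o.
Definition nilp_in (R : nzRingType) (S : R -> Prop) (q : R) : Prop :=
  S q /\ exists n : nat, q ^+ n = 0.
Definition clean_in (R : nzRingType) (S : R -> Prop) (o a : R) : Prop :=
  exists e u, idem_in S e /\ unit_in S o u /\ a = e + u.
Definition snc_in (R : nzRingType) (S : R -> Prop) (a : R) : Prop :=
  exists e q, idem_in S e /\ nilp_in S q /\ e * q = q * e /\ a = e + q.
Definition CSNC_in (R : nzRingType) (S : R -> Prop) (o : R) : Prop :=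
  forall a, S a -> clean_in S o a -> snc_in S a.

Definition corner (R : nzRingType) (e : R) : R -> Prop :=
  fun x => exists y : R, x = e * y * e.

(** The key fact is that in any ring an element [a] is strongly nil-clean as
    soon as [a - a^2] is nilpotent, and the idempotent can be taken to be a
    polynomial in [a] without constant term: the Newton iteration
    [e |-> 3 e^2 - 2 e^3] started at [a] squares the defect [e - e^2] at each
    step while moving [e] only by multiples of [a - a^2].  Such an idempotent
    lies in every subring containing [a].

    Now let [a] be clean in [S], with identity [o], and put [f = 1 - o], an
    idempotent annihilating [S] on both sides.  Then [a + f] is clean in [R],
    hence strongly nil-clean, so [(a + f) - (a + f)^2] is nilpotent; but
    this element equals [a - a^2]. *)

From mathcomp Require Import all_boot all_algebra.
From mathcomp Require Import ring.

Set Implicit Arguments.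
Unset Strict Implicit.
Unset Printing Implicit Defensive.
Import GRing.Theory.
Local Open Scope ring_scope.

Fixpoint newton_idem (k : nat) : {poly int} :=
  if k is k'.+1 then 3 * newton_idem k' ^+ 2 - 2 * newton_idem k' ^+ 3 else 'X.

Definition idem_defect {R : nzRingType} (x : R) := x - x ^+ 2.

Lemma idem_defect_newton_idem k :
  exists W, idem_defect (newton_idem k) = idem_defect 'X ^+ (2 ^ k) * W.
Proof.
elim: k => [|k [W IH]]; first by exists 1; rewrite expn0 expr1 mulr1.
exists (W ^+ 2 * (3 + 4 * idem_defect (newton_idem k))).
have -> : idem_defect (newton_idem k.+1) =
    idem_defect (newton_idem k) ^+ 2 * (3 + 4 * idem_defect (newton_idem k)).
  by rewrite /idem_defect /=; ring.
by rewrite {1}IH expnS mul2n -addnn exprD; ring.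
Qed.

Lemma X_sub_newton_idem k : exists V, 'X - newton_idem k = idem_defect 'X * V.
Proof.
elim: k => [|k [V IH]]; first by exists 0; rewrite mulr0 subrr.
have [W defW] := idem_defect_newton_idem k.
exists (V + idem_defect 'X ^+ (2 ^ k).-1 * W * (1 - 2 * newton_idem k)).
have -> : 'X - newton_idem k.+1 = ('X - newton_idem k)
    + idem_defect (newton_idem k) * (1 - 2 * newton_idem k).
  by rewrite /idem_defect /=; ring.
rewrite IH defW -{1}(prednK (expn_gt0 2 k)) exprS; ring.
Qed.

Lemma newton_idem_Xdiv k : exists r, newton_idem k = 'X * r.
Proof.
elim: k => [|k [r IH]]; first by exists 1; rewrite mulr1.
by exists (3 * 'X * r ^+ 2 - 2 * 'X ^+ 2 * r ^+ 3); rewrite /= IH; ring.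
Qed.

Lemma nilp_mul_comm (R : nzRingType) (x y : R) :
  GRing.comm x y -> nilp x -> nilp (x * y).
Proof. by move=> cxy [n xn]; exists n; rewrite exprMn_comm // xn mul0r. Qed.

Lemma strongly_nil_clean_nilp (R : nzRingType) (b : R) :
  strongly_nil_clean b -> nilp (idem_defect b).
Proof.
move=> [g [q [gg [qnil [gq ->]]]]].
have -> : idem_defect (g + q) = q * (1 - g *+ 2 - q).
  rewrite /idem_defect expr2 mulrDr !mulrDl gg gq !mulrBr mulr1 mulrnAr mulr2n.
  by rewrite !opprD !addrA [g + q]addrC addrK.
apply: nilp_mul_comm qnil.
by rewrite /GRing.comm !mulrBl !mulrBr mulr1 mul1r mulrnAr mulrnAl gq.
Qed.

Lemma rmorph_idem_defect (R R' : nzRingType) (f : {rmorphism R -> R'}) x :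
  f (idem_defect x) = idem_defect (f x).
Proof. by rewrite rmorphB rmorphXn. Qed.

Section NewtonLift.

Variables (R : nzRingType) (S : R -> Prop) (a : R).
Hypothesis S_add : forall x y, S x -> S y -> S (x + y).
Hypothesis S_opp : forall x, S x -> S (- x).
Hypothesis S_mul : forall x y, S x -> S y -> S (x * y).
Hypothesis S_a : S a.

Let intr_R : {rmorphism int -> R} := intmul 1.
Let comm_a_intr : commr_rmorph intr_R a. Proof. exact: commr_int. Qed.
Local Notation ev := (horner_morph comm_a_intr).

Lemma comm_ev p q : GRing.comm (ev p) (ev q).
Proof. by rewrite /GRing.comm -!rmorphM mulrC. Qed.

Lemma S0 : S 0.
Proof. by rewrite -(subrr a); apply/S_add/S_opp. Qed.

Lemma S_mulrz x c : S x -> S (x *~ c).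
Proof.
move=> Sx; have S_mulrn n : S (x *+ n).
  by elim: n => [|n IH]; [exact: S0 | rewrite mulrS; apply: S_add].
by case: c => n; rewrite ?NegzE ?mulrNz; [|apply: S_opp]; apply: S_mulrn.
Qed.

Lemma S_mul_ev p : S (a * ev p).
Proof.
elim/poly_ind: p => [|p c IH]; first by rewrite raddf0 mulr0; apply: S0.
rewrite rmorphD rmorphM /= horner_morphX horner_morphC mulrDr mulrA.
by apply: S_add; [apply: S_mul | rewrite mulrzr; apply: S_mulrz].
Qed.

Lemma snc_in_of_nilp_idem_defect : nilp (idem_defect a) -> snc_in S a.
Proof.
move=> [n defect_n].
have [W defW] := idem_defect_newton_idem n.
have [V defV] := X_sub_newton_idem n.
have [r defr] := newton_idem_Xdiv n.
have ev_defect : ev (idem_defect 'X) = idem_defect a.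
  by rewrite rmorph_idem_defect /= horner_morphX.
have defect_2n : idem_defect a ^+ (2 ^ n) = 0.
  by rewrite -(subnK (ltnW (ltn_expl n (ltnSn 1)))) exprD defect_n mulr0.
pose e := ev (newton_idem n).
have S_e : S e by rewrite /e defr rmorphM /= horner_morphX; apply: S_mul_ev.
have a_sub_e : a - e = ev ('X - newton_idem n) by rewrite rmorphB /= horner_morphX.
exists e, (a - e); split; last split; last split.
- split=> //.
  apply/eqP; rewrite eq_sym -subr_eq0 -expr2 -[_ - _]/(idem_defect e).
  by rewrite -rmorph_idem_defect defW rmorphM rmorphXn /= ev_defect defect_2n mul0r.
- split; first by apply/S_add/S_opp.
  rewrite a_sub_e defV rmorphM /= ev_defect.
  by apply: nilp_mul_comm; [rewrite -ev_defect; apply: comm_ev | exists n].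
- by rewrite a_sub_e; apply: comm_ev.
- by rewrite addrC subrK.
Qed.

End NewtonLift.

Section SubringWithId.

Variables (R : nzRingType) (S : R -> Prop) (o : R).
Hypothesis S_subring : subring_with_id S o.

Lemma mulr_compl_id x : S x -> x * (1 - o) = 0.
Proof.
by case: S_subring => _ _ _ _ o_id Sx; rewrite mulrBr mulr1 (proj2 (o_id x Sx)) subrr.
Qed.

Lemma mul_compl_idr x : S x -> (1 - o) * x = 0.
Proof.
by case: S_subring => _ _ _ _ o_id Sx; rewrite mulrBl mul1r (proj1 (o_id x Sx)) subrr.
Qed.

Lemma compl_id_idem : idem (1 - o).
Proof.
have [_ _ _ S_o _] := S_subring.
by rewrite /idem {1}mulrBl mul1r mulr_compl_id // subr0.
Qed.

Lemma mul_add_compl_id x y :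
  S x -> S y -> (x + (1 - o)) * (y + (1 - o)) = x * y + (1 - o).
Proof.
move=> S_x S_y; rewrite mulrDl [x * _]mulrDr [(1 - o) * _]mulrDr.
by rewrite mulr_compl_id // mul_compl_idr // compl_id_idem addr0 add0r.
Qed.

Lemma idem_defect_add_compl_id a : S a -> idem_defect (a + (1 - o)) = idem_defect a.
Proof.
by move=> S_a; rewrite /idem_defect !expr2 mul_add_compl_id // opprD addrACA subrr addr0.
Qed.

Lemma clean_add_compl_id a : clean_in S o a -> clean (a + (1 - o)).
Proof.
move=> [e [u [[S_e ee] [[S_u [v [S_v [uv vu]]]] ->]]]].
exists e, (u + (1 - o)); split; first exact: ee.
split; last by rewrite -addrA.
by exists (v + (1 - o)); rewrite !mul_add_compl_id // uv vu addrC subrK.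
Qed.

Lemma CSNC_in_subring_with_id : CSNC R -> CSNC_in S o.
Proof.
move=> R_CSNC a S_a a_clean; have [S_add S_opp S_mul _ _] := S_subring.
apply: snc_in_of_nilp_idem_defect => //.
rewrite -idem_defect_add_compl_id //.
exact/strongly_nil_clean_nilp/R_CSNC/clean_add_compl_id.
Qed.

End SubringWithId.

Lemma corner_subring_with_id (R : nzRingType) (e : R) :
  idem e -> subring_with_id (corner e) e.
Proof.
move=> ee; split.
- by move=> _ _ [x ->] [y ->]; exists (x + y); rewrite mulrDr mulrDl.
- by move=> _ [x ->]; exists (- x); rewrite mulrN mulNr.
- by move=> _ _ [x ->] [y ->]; exists (x * e * e * y); rewrite !mulrA.
- by exists 1; rewrite mulr1 ee.
- by move=> _ [x ->]; rewrite !mulrA ee -!mulrA ee.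
Qed.

Theorem mainTheorem16 (R : nzRingType) (hR : CSNC R) :
  (forall (S : R -> Prop) (o : R), subring_with_id S o -> CSNC_in S o) /\
  (forall e : R, idem e -> CSNC_in (corner e) e).
Proof.
split=> [S o S_subring | e ee].
  exact: CSNC_in_subring_with_id S_subring hR.
exact: CSNC_in_subring_with_id (corner_subring_with_id ee) hR.
Qed.
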